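(* Let $\alpha>0$, $\beta_m>\alpha$, $\tau=1/(\beta_m-\alpha)$ and $$\beta(t)=\alpha+\frac{1/\tau}{1+t/\tau}.$$ Let $S_0>0$, $I_0>0$ and let $(S(t),I(t),R(t))$ be the solution of $$\dot S=-\frac{\beta(t)SI}{S+I},\qquad \dot I=\frac{\beta(t)SI}{S+I}-\alpha I,\qquad \dot R=\alpha I$$ with $S(0)=S_0$, $I(0)=I_0$. Then for $t\ge 0$, $$S(t)=S_0\left(\frac{S_0+I_0}{S_0+I_0(1+t/\tau)}\right)^{1-\frac{S_0}{I_0}\alpha\tau}e^{-\alpha t},\qquad I(t)=I_0\left(1+\frac t\tau\right)\left(\frac{S_0+I_0}{S_0+I_0(1+t/\tau)}\right)^{1-\frac{S_0}{I_0}\alpha\tau}e^{-\alpha t},$$ and the maximum of $I(t)$ occurs at $$t_{\mathrm{peak}}=\tau\left(\sqrt{\frac{S_0}{I_0\alpha\tau}}-1\right).$$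
   Context: Modified SIR epidemiological model with constant recovery rate $\alpha$ and time-dependent transmission rate $\beta(t)$, here monotonically decreasing from $\beta_m$ at $t=0$ towards $\alpha$. *)

From Stdlib Require Export Reals.
Open Scope R_scope.

Definition beta_t (alpha tau t : R) : R := alpha + (1 / tau) / (1 + t / tau).

Definition right_cont_at0 (f : R -> R) : Prop :=
  forall eps, 0 < eps -> exists delta, 0 < delta /\
    forall t, 0 <= t < delta -> Rabs (f t - f 0) < eps.

From Stdlib Require Import Reals Lra Classical.
From Coquelicot Require Import Coquelicot.
Open Scope R_scope.

(* While S and I are positive, (ln I - ln S)' = beta - alpha = (ln (1 + t / tau))', so
   I / S = (I0 / S0) (1 + t / tau).  Along this ratio (ln S)' is an explicit function of t,
   and integrating it gives the closed form of S, hence of I.  The closed forms are positive,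
   so a continuation argument shows that S and I never leave the positive quadrant.
   Finally I = I0 exp (I_exponent), and I_exponent' has the sign of
   S0 - alpha tau I0 (1 + t / tau)^2, which changes sign exactly once, at tpeak. *)

Lemma derivable_pt_lim_ln_comp f x l :
  derivable_pt_lim f x l -> 0 < f x -> derivable_pt_lim (fun t => ln (f t)) x (l / f x).
Proof.
  intros Hf Hpos.
  replace (l / f x) with (/ f x * l) by (unfold Rdiv; ring).
  exact (derivable_pt_lim_comp f ln x l (/ f x) Hf (derivable_pt_lim_ln _ Hpos)).
Qed.

Lemma right_cont_at0_plus f g :
  right_cont_at0 f -> right_cont_at0 g -> right_cont_at0 (fun t => f t + g t).
Proof.
  intros Hf Hg eps Heps.
  destruct (Hf (eps / 2)) as [d1 [Hd1 H1]]; [lra|].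
  destruct (Hg (eps / 2)) as [d2 [Hd2 H2]]; [lra|].
  exists (Rmin d1 d2). split; [now apply Rmin_glb_lt|].
  intros t Ht.
  assert (t < d1) by (eapply Rlt_le_trans; [apply Ht | apply Rmin_l]).
  assert (t < d2) by (eapply Rlt_le_trans; [apply Ht | apply Rmin_r]).
  specialize (H1 t (conj (proj1 Ht) H)). specialize (H2 t (conj (proj1 Ht) H0)).
  replace (f t + g t - (f 0 + g 0)) with ((f t - f 0) + (g t - g 0)) by ring.
  eapply Rle_lt_trans; [apply Rabs_triang | lra].
Qed.

Lemma right_cont_at0_comp h f :
  right_cont_at0 f -> continuity_pt h (f 0) -> right_cont_at0 (fun t => h (f t)).
Proof.
  intros Hf Hh eps Heps.
  destruct (Hh eps Heps) as [a [Ha Hnear]].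
  destruct (Hf a Ha) as [d [Hd Hfd]].
  exists d. split; [exact Hd|]. intros t Ht.
  destruct (Req_dec (f t) (f 0)) as [E|E].
  - rewrite E, Rminus_diag, Rabs_R0. exact Heps.
  - apply Hnear. split; [split; [exact I | auto] | apply Hfd, Ht].
Qed.

Lemma right_cont_at0_minus f g :
  right_cont_at0 f -> right_cont_at0 g -> right_cont_at0 (fun t => f t - g t).
Proof.
  intros Hf Hg. apply (right_cont_at0_plus f (fun t => - g t) Hf).
  apply (right_cont_at0_comp Ropp g Hg), continuity_pt_opp, continuity_pt_id.
Qed.

Lemma right_cont_at0_of_continuity_pt f : continuity_pt f 0 -> right_cont_at0 f.
Proof.
  intros Hf. apply (right_cont_at0_comp f (fun t => t)); [|exact Hf].
  intros eps Heps. exists eps. split; [exact Heps|].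
  intros t Ht. rewrite Rminus_0_r, Rabs_right; lra.
Qed.

Lemma right_cont_at0_ln f : right_cont_at0 f -> 0 < f 0 -> right_cont_at0 (fun t => ln (f t)).
Proof.
  intros Hf Hpos. apply (right_cont_at0_comp ln f Hf).
  apply derivable_continuous_pt. exists (/ f 0). exact (derivable_pt_lim_ln _ Hpos).
Qed.

Lemma right_cont_at0_eq_const g t1 c : 0 < t1 -> right_cont_at0 g ->
  (forall s, 0 < s < t1 -> g s = c) -> g 0 = c.
Proof.
  intros Ht1 Hg Hc. apply cond_eq. intros eps Heps.
  destruct (Hg eps Heps) as [d [Hd Hnear]].
  assert (0 < Rmin d t1) by (now apply Rmin_glb_lt).
  assert (Rmin d t1 <= d) by apply Rmin_l.
  assert (Rmin d t1 <= t1) by apply Rmin_r.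
  rewrite <- (Hc (Rmin d t1 / 2)) by lra.
  rewrite Rabs_minus_sym. apply Hnear. lra.
Qed.

Lemma continuity_pt_eq_left f g a T : a < T -> continuity_pt f T -> continuity_pt g T ->
  (forall s, a < s < T -> f s = g s) -> f T = g T.
Proof.
  intros HaT Hf Hg Hfg. apply Rminus_diag_uniq, cond_eq. intros eps Heps.
  destruct (continuity_pt_minus f g T Hf Hg eps Heps) as [d [Hd Hnear]].
  assert (0 < Rmin d (T - a)) by (apply Rmin_glb_lt; lra).
  assert (Rmin d (T - a) <= d) by apply Rmin_l.
  assert (Rmin d (T - a) <= T - a) by apply Rmin_r.
  set (s := T - Rmin d (T - a) / 2).
  rewrite Rminus_0_r, <- Rabs_Ropp.
  replace (- (f T - g T)) with (f s - g s - (f T - g T)) by (rewrite Hfg by (unfold s; lra); ring).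
  apply Hnear. split; [split; [exact I | unfold s; lra]|].
  simpl. unfold R_dist, s. rewrite Rabs_left; lra.
Qed.

Lemma null_derivative_right_cont g t1 : 0 <= t1 -> right_cont_at0 g ->
  (forall s, 0 < s <= t1 -> derivable_pt_lim g s 0) -> g t1 = g 0.
Proof.
  intros Ht1 Hg Hd. destruct (Req_dec t1 0) as [-> | Hne]; [reflexivity|].
  symmetry. apply (right_cont_at0_eq_const g t1); [lra | exact Hg|].
  intros s Hs.
  destruct (MVT_cor2 g (fun _ => 0) s t1) as [c [Hc _]]; [lra | intros c Hc; apply Hd; lra|].
  lra.
Qed.

Definition on_right_nbhd (T : R) (P : R -> Prop) : Prop :=
  exists d, 0 < d /\ forall s, T <= s < T + d -> P s.

Lemma on_right_nbhd_and T P Q :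
  on_right_nbhd T P -> on_right_nbhd T Q -> on_right_nbhd T (fun s => P s /\ Q s).
Proof.
  intros [d1 [Hd1 HP]] [d2 [Hd2 HQ]].
  exists (Rmin d1 d2). split; [now apply Rmin_glb_lt|].
  assert (Rmin d1 d2 <= d1) by apply Rmin_l.
  assert (Rmin d1 d2 <= d2) by apply Rmin_r.
  intros s Hs. split; [apply HP | apply HQ]; lra.
Qed.

Lemma on_right_nbhd0_pos f : right_cont_at0 f -> 0 < f 0 -> on_right_nbhd 0 (fun s => 0 < f s).
Proof.
  intros Hf Hpos. destruct (Hf _ Hpos) as [d [Hd Hnear]].
  exists d. split; [exact Hd|]. intros s Hs.
  assert (Hs' := Hnear s ltac:(lra)). apply Rabs_def2 in Hs'. lra.
Qed.

Lemma on_right_nbhd_pos f T : continuity_pt f T -> 0 < f T -> on_right_nbhd T (fun s => 0 < f s).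
Proof.
  intros Hf Hpos. destruct (Hf _ Hpos) as [d [Hd Hnear]].
  exists d. split; [exact Hd|]. intros s Hs.
  destruct (Req_dec s T) as [-> | Hne]; [exact Hpos|].
  assert (Hs' : Rabs (f s - f T) < f T).
  { apply Hnear. split; [split; [exact I | auto]|].
    simpl. unfold R_dist. rewrite Rabs_right; lra. }
  apply Rabs_def2 in Hs'. lra.
Qed.

Lemma real_induction (P : R -> Prop) :
  (forall T, 0 <= T -> (forall s, 0 <= s < T -> P s) -> on_right_nbhd T P) ->
  forall t, 0 <= t -> P t.
Proof.
  intros Hstep t Ht. apply NNPP. intros Hnt.
  set (E := fun x => 0 <= x /\ forall s, 0 <= s < x -> P s).
  assert (Hbound : bound E).
  { exists t. intros x [_ Hx]. destruct (Rle_dec x t) as [|Hxt]; [assumption|].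
    exfalso. apply Hnt, Hx. lra. }
  assert (HE0 : E 0) by (split; [lra | intros s Hs; lra]).
  destruct (completeness E Hbound (ex_intro _ 0 HE0)) as [T [HTub HTlub]].
  assert (HT : 0 <= T) by (apply HTub, HE0).
  assert (Hbelow : forall s, 0 <= s < T -> P s).
  { intros s Hs. apply NNPP. intros Hns.
    assert (T <= s); [|lra].
    apply HTlub. intros x [_ Hx]. destruct (Rle_dec x s) as [|Hxs]; [assumption|].
    exfalso. apply Hns, Hx. lra. }
  destruct (Hstep T HT Hbelow) as [d [Hd Hright]].
  assert (T + d <= T); [|lra].
  apply HTub. split; [lra|]. intros s Hs.
  destruct (Rlt_le_dec s T); [apply Hbelow | apply Hright]; lra.
Qed.

Lemma max_of_derive_sign_change (f f' : R -> R) a m : a <= m ->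
  (forall c, a <= c -> derivable_pt_lim f c (f' c)) ->
  (forall c, a <= c < m -> 0 <= f' c) -> (forall c, m < c -> f' c <= 0) ->
  forall t, a <= t -> f t <= f m.
Proof.
  intros Ham Hd Hinc Hdec t Ht.
  destruct (Rtotal_order t m) as [Hlt | [-> | Hgt]].
  - destruct (MVT_cor2 f f' t m Hlt) as [c [Hmvt Hc]]; [intros c Hc; apply Hd; lra|].
    assert (0 <= f' c) by (apply Hinc; lra). nra.
  - lra.
  - destruct (MVT_cor2 f f' m t Hgt) as [c [Hmvt Hc]]; [intros c Hc; apply Hd; lra|].
    assert (f' c <= 0) by (apply Hdec; lra). nra.
Qed.

Section SIR.

Variables alpha tau S0 I0 : R.
Hypotheses (tau_pos : 0 < tau) (S0_pos : 0 < S0) (I0_pos : 0 < I0).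

Local Notation p := (1 - S0 / I0 * alpha * tau).

Definition S_explicit t :=
  S0 * Rpower ((S0 + I0) / (S0 + I0 * (1 + t / tau))) p * exp (- alpha * t).
Definition I_explicit t :=
  I0 * (1 + t / tau) * Rpower ((S0 + I0) / (S0 + I0 * (1 + t / tau))) p * exp (- alpha * t).

Definition S_exponent t := p * ln ((S0 + I0) / (S0 + I0 * (1 + t / tau))) - alpha * t.
Definition I_exponent t := ln (1 + t / tau) + S_exponent t.

Lemma growth_factor_pos t : 0 <= t -> 0 < 1 + t / tau.
Proof. intros Ht. assert (0 <= t / tau) by (apply Rdiv_le_0_compat; lra). lra. Qed.

Lemma S0_add_I0_growth_pos t : 0 <= t -> 0 < S0 + I0 * (1 + t / tau).
Proof. intros Ht. assert (0 < 1 + t / tau) by (now apply growth_factor_pos). nra. Qed.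

Lemma S_explicit_exp t : S_explicit t = S0 * exp (S_exponent t).
Proof.
  unfold S_explicit, S_exponent, Rpower.
  rewrite Rmult_assoc, <- exp_plus. do 2 f_equal. ring.
Qed.

Lemma I_explicit_exp t : 0 <= t -> I_explicit t = I0 * exp (I_exponent t).
Proof.
  intros Ht. unfold I_explicit, I_exponent.
  rewrite exp_plus, exp_ln by (now apply growth_factor_pos).
  replace (I0 * (1 + t / tau) * Rpower _ p * exp (- alpha * t))
    with (I0 / S0 * (1 + t / tau) * S_explicit t) by (unfold S_explicit; field; lra).
  rewrite S_explicit_exp. field. lra.
Qed.

Lemma growth_log_derive t : 0 <= t ->
  derivable_pt_lim (fun x => ln (1 + x / tau)) t ((1 / tau) / (1 + t / tau)).
Proof.
  intros Ht. assert (0 < 1 + t / tau) by (now apply growth_factor_pos).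
  apply is_derive_Reals. auto_derive; [lra | field; lra].
Qed.

(* this is beta I / (S + I) evaluated along I / S = (I0 / S0) (1 + t / tau) *)
Lemma S_exponent_derive t : 0 <= t ->
  derivable_pt_lim S_exponent t
    (- (beta_t alpha tau t * (I0 * (1 + t / tau)) / (S0 + I0 * (1 + t / tau)))).
Proof.
  intros Ht. assert (0 < 1 + t / tau) by (now apply growth_factor_pos).
  assert (0 < S0 + I0 * (1 + t / tau)) by (now apply S0_add_I0_growth_pos).
  apply is_derive_Reals. unfold S_exponent, beta_t. auto_derive.
  - split; [lra|]. split; [|lra]. apply Rdiv_lt_0_compat; lra.
  - assert (0 < S0 * tau + I0 * (tau + t)) by nra. field. repeat split; lra.
Qed.

Lemma S_explicit_continuity_pt t : 0 <= t -> continuity_pt S_explicit t.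
Proof.
  intros Ht. assert (0 < S0 + I0 * (1 + t / tau)) by (now apply S0_add_I0_growth_pos).
  apply continuity_pt_filterlim, (@ex_derive_continuous R_AbsRing R_NormedModule).
  unfold S_explicit, Rpower. auto_derive.
  split; [lra|]. split; [|lra]. apply Rdiv_lt_0_compat; lra.
Qed.

Lemma I_explicit_continuity_pt t : 0 <= t -> continuity_pt I_explicit t.
Proof.
  intros Ht. assert (0 < S0 + I0 * (1 + t / tau)) by (now apply S0_add_I0_growth_pos).
  apply continuity_pt_filterlim, (@ex_derive_continuous R_AbsRing R_NormedModule).
  unfold I_explicit, Rpower. auto_derive.
  split; [lra|]. split; [|lra]. apply Rdiv_lt_0_compat; lra.
Qed.

Section Solution.

Variables S I : R -> R.

Local Notation flux t := (beta_t alpha tau t * S t * I t / (S t + I t)).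

Hypotheses
  (S_deriv : forall t, 0 < t -> derivable_pt_lim S t (- flux t))
  (I_deriv : forall t, 0 < t -> derivable_pt_lim I t (flux t - alpha * I t))
  (S_right_cont : right_cont_at0 S) (I_right_cont : right_cont_at0 I)
  (S_init : S 0 = S0) (I_init : I 0 = I0).

Section Positive.

Variable t1 : R.
Hypothesis S_I_pos_upto : forall s, 0 <= s <= t1 -> 0 < S s /\ 0 < I s.

(* the log-derivatives of I and S differ by beta - alpha = d/dt ln (1 + t / tau) *)
Lemma ln_I_sub_ln_S t : 0 <= t <= t1 ->
  ln (I t) - ln (S t) - ln (1 + t / tau) = ln I0 - ln S0.
Proof.
  intros Ht.
  rewrite (null_derivative_right_cont (fun x => ln (I x) - ln (S x) - ln (1 + x / tau)) t).
  - rewrite S_init, I_init, Rdiv_0_l, Rplus_0_r, ln_1. ring.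
  - lra.
  - apply right_cont_at0_minus; [apply right_cont_at0_minus|].
    + apply right_cont_at0_ln; [exact I_right_cont | rewrite I_init; exact I0_pos].
    + apply right_cont_at0_ln; [exact S_right_cont | rewrite S_init; exact S0_pos].
    + apply right_cont_at0_of_continuity_pt, derivable_continuous_pt.
      eexists. apply growth_log_derive. lra.
  - intros s Hs. destruct (S_I_pos_upto s) as [HSs HIs]; [lra|].
    assert (0 < 1 + s / tau) by (apply growth_factor_pos; lra).
    replace 0 with ((flux s - alpha * I s) / I s - (- flux s) / S s - (1 / tau) / (1 + s / tau))
      by (unfold beta_t; field; lra).
    apply derivable_pt_lim_minus; [apply derivable_pt_lim_minus|].
    + apply derivable_pt_lim_ln_comp; [apply I_deriv; lra | exact HIs].
    + apply derivable_pt_lim_ln_comp; [apply S_deriv; lra | exact HSs].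
    + apply growth_log_derive. lra.
Qed.

Lemma I_eq_ratio_S t : 0 <= t <= t1 -> I t = I0 / S0 * (1 + t / tau) * S t.
Proof.
  intros Ht. destruct (S_I_pos_upto t Ht) as [HSt HIt].
  assert (0 < 1 + t / tau) by (apply growth_factor_pos; lra).
  assert (0 < I0 / S0) by (now apply Rdiv_lt_0_compat).
  apply ln_inv; [exact HIt | apply Rmult_lt_0_compat; [apply Rmult_lt_0_compat|]; assumption|].
  rewrite ln_mult, ln_mult, ln_div by first [assumption | apply Rmult_lt_0_compat; assumption].
  assert (Hln := ln_I_sub_ln_S t Ht). lra.
Qed.

Lemma ln_S_sub_S_exponent t : 0 <= t <= t1 -> ln (S t) - S_exponent t = ln S0.
Proof.
  intros Ht.
  rewrite (null_derivative_right_cont (fun x => ln (S x) - S_exponent x) t).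
  - rewrite S_init. unfold S_exponent.
    rewrite Rdiv_0_l, Rplus_0_r, Rmult_1_r, Rdiv_diag, ln_1 by lra. ring.
  - lra.
  - apply right_cont_at0_minus.
    + apply right_cont_at0_ln; [exact S_right_cont | rewrite S_init; exact S0_pos].
    + apply right_cont_at0_of_continuity_pt, derivable_continuous_pt.
      eexists. apply S_exponent_derive. lra.
  - intros s Hs. destruct (S_I_pos_upto s) as [HSs HIs]; [lra|].
    assert (0 < 1 + s / tau) by (apply growth_factor_pos; lra).
    assert (0 < S0 + I0 * (1 + s / tau)) by (apply S0_add_I0_growth_pos; lra).
    replace 0 with ((- flux s) / S s
      - - (beta_t alpha tau s * (I0 * (1 + s / tau)) / (S0 + I0 * (1 + s / tau)))).
    + apply derivable_pt_lim_minus.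
      * apply derivable_pt_lim_ln_comp; [apply S_deriv; lra | exact HSs].
      * apply S_exponent_derive. lra.
    + assert (0 < S0 * tau + I0 * (tau + s)) by nra.
      assert (0 < S s * (S0 * tau + I0 * (tau + s))) by nra.
      rewrite (I_eq_ratio_S s) by lra. unfold beta_t. field. repeat split; lra.
Qed.

Lemma S_I_explicit_upto t : 0 <= t <= t1 -> S t = S_explicit t /\ I t = I_explicit t.
Proof.
  intros Ht. destruct (S_I_pos_upto t Ht) as [HSt _].
  assert (HS : S t = S_explicit t).
  { rewrite S_explicit_exp, <- (exp_ln (S t) HSt), <- (exp_ln S0 S0_pos), <- exp_plus.
    f_equal. rewrite <- (ln_S_sub_S_exponent t Ht). ring. }
  split; [exact HS|].
  rewrite (I_eq_ratio_S t Ht), HS. unfold S_explicit, I_explicit. field. lra.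
Qed.

End Positive.

Lemma S_I_pos t : 0 <= t -> 0 < S t /\ 0 < I t.
Proof.
  apply (real_induction (fun s => 0 < S s /\ 0 < I s)).
  intros T HT Hbelow.
  destruct (Req_dec T 0) as [-> | HT0].
  - apply on_right_nbhd_and; apply on_right_nbhd0_pos; try assumption.
    + rewrite S_init. exact S0_pos.
    + rewrite I_init. exact I0_pos.
  - assert (Hexpl : forall s, 0 < s < T -> S s = S_explicit s /\ I s = I_explicit s).
    { intros s Hs. apply (S_I_explicit_upto s); [|lra].
      intros r Hr. apply Hbelow. lra. }
    assert (HcS : continuity_pt S T).
    { apply derivable_continuous_pt. eexists. apply S_deriv. lra. }
    assert (HcI : continuity_pt I T).
    { apply derivable_continuous_pt. eexists. apply I_deriv. lra. }
    assert (HST : S T = S_explicit T).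
    { apply (continuity_pt_eq_left _ _ 0); [lra | exact HcS | now apply S_explicit_continuity_pt |].
      intros s Hs. exact (proj1 (Hexpl s Hs)). }
    assert (HIT : I T = I_explicit T).
    { apply (continuity_pt_eq_left _ _ 0); [lra | exact HcI | now apply I_explicit_continuity_pt |].
      intros s Hs. exact (proj2 (Hexpl s Hs)). }
    apply on_right_nbhd_and; apply on_right_nbhd_pos; try assumption.
    + rewrite HST, S_explicit_exp. apply Rmult_lt_0_compat; [exact S0_pos | apply exp_pos].
    + rewrite HIT, I_explicit_exp by exact HT.
      apply Rmult_lt_0_compat; [exact I0_pos | apply exp_pos].
Qed.

Lemma S_I_explicit t : 0 <= t -> S t = S_explicit t /\ I t = I_explicit t.
Proof.
  intros Ht. apply (S_I_explicit_upto t); [|lra].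
  intros s Hs. apply S_I_pos. lra.
Qed.

End Solution.

Section Peak.

Hypothesis alpha_pos : 0 < alpha.

Definition t_peak := tau * (sqrt (S0 / (I0 * alpha * tau)) - 1).

Lemma I_exponent_slope_factor c : 0 <= c ->
  (1 / tau) / (1 + c / tau)
    + - (beta_t alpha tau c * (I0 * (1 + c / tau)) / (S0 + I0 * (1 + c / tau)))
  = alpha * I0 * (sqrt (S0 / (I0 * alpha * tau)) + (1 + c / tau))
      / (tau * (1 + c / tau) * (S0 + I0 * (1 + c / tau))) * (t_peak - c).
Proof.
  intros Hc. unfold t_peak.
  assert (0 < 1 + c / tau) by (now apply growth_factor_pos).
  assert (0 < S0 + I0 * (1 + c / tau)) by (now apply S0_add_I0_growth_pos).
  set (A := sqrt (S0 / (I0 * alpha * tau))).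
  assert (HS0 : S0 = alpha * tau * I0 * (A * A)).
  { unfold A. rewrite sqrt_sqrt; [field; lra|].
    apply Rlt_le, Rdiv_lt_0_compat; [lra|]. apply Rmult_lt_0_compat; nra. }
  assert (0 < S0 * tau + I0 * (tau + c)) by nra.
  transitivity ((S0 - alpha * tau * I0 * ((1 + c / tau) * (1 + c / tau)))
                / (tau * (1 + c / tau) * (S0 + I0 * (1 + c / tau)))).
  - unfold beta_t. field. repeat split; lra.
  - rewrite HS0 at 1. field. repeat split; lra.
Qed.

Lemma I_exponent_le_peak t : 0 <= t_peak -> 0 <= t -> I_exponent t <= I_exponent t_peak.
Proof.
  intros Hpeak Ht.
  assert (Hfactor : forall c, 0 <= c ->
    0 < alpha * I0 * (sqrt (S0 / (I0 * alpha * tau)) + (1 + c / tau))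
        / (tau * (1 + c / tau) * (S0 + I0 * (1 + c / tau)))).
  { intros c Hc.
    assert (0 < 1 + c / tau) by (now apply growth_factor_pos).
    assert (0 < S0 + I0 * (1 + c / tau)) by (now apply S0_add_I0_growth_pos).
    assert (0 <= sqrt (S0 / (I0 * alpha * tau))) by apply sqrt_pos.
    apply Rdiv_lt_0_compat; apply Rmult_lt_0_compat; try apply Rmult_lt_0_compat; lra. }
  apply (max_of_derive_sign_change I_exponent
    (fun c => (1 / tau) / (1 + c / tau)
      + - (beta_t alpha tau c * (I0 * (1 + c / tau)) / (S0 + I0 * (1 + c / tau))))
    0); try assumption.
  - intros c Hc. apply derivable_pt_lim_plus;
      [apply growth_log_derive | apply S_exponent_derive]; exact Hc.
  - intros c Hc. rewrite I_exponent_slope_factor by lra.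
    assert (Hk := Hfactor c (proj1 Hc)). nra.
  - intros c Hc. rewrite I_exponent_slope_factor by lra.
    assert (Hk := Hfactor c ltac:(lra)). nra.
Qed.

Lemma I_explicit_le_peak t : 0 <= t_peak -> 0 <= t -> I_explicit t <= I_explicit t_peak.
Proof.
  intros Hpeak Ht. rewrite !I_explicit_exp by assumption.
  apply Rmult_le_compat_l; [lra|].
  destruct (Rle_lt_or_eq_dec _ _ (I_exponent_le_peak t Hpeak Ht)) as [Hlt | ->].
  - left. now apply exp_increasing.
  - right. reflexivity.
Qed.

End Peak.

End SIR.

Theorem mainTheorem5 (alpha beta_m S0 I0 : R) (S I Rc : R -> R) :
  0 < alpha -> alpha < beta_m -> 0 < S0 -> 0 < I0 ->
  let tau := 1 / (beta_m - alpha) in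
  (* (S, I, Rc) solves the ODE system for t > 0 *)
  (forall t, 0 < t ->
     derivable_pt_lim S t (- (beta_t alpha tau t * S t * I t / (S t + I t)))) ->
  (forall t, 0 < t ->
     derivable_pt_lim I t (beta_t alpha tau t * S t * I t / (S t + I t) - alpha * I t)) ->
  (forall t, 0 < t -> derivable_pt_lim Rc t (alpha * I t)) ->
  (* continuity at the initial time and initial conditions *)
  right_cont_at0 S -> right_cont_at0 I -> right_cont_at0 Rc ->
  S 0 = S0 -> I 0 = I0 ->
  let p := 1 - S0 / I0 * alpha * tau in
  let tpeak := tau * (sqrt (S0 / (I0 * alpha * tau)) - 1) in
  (forall t, 0 <= t ->
     S t = S0 * Rpower ((S0 + I0) / (S0 + I0 * (1 + t / tau))) p * exp (- alpha * t) /\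
     I t = I0 * (1 + t / tau)
             * Rpower ((S0 + I0) / (S0 + I0 * (1 + t / tau))) p * exp (- alpha * t)) /\
  (0 <= tpeak -> forall t, 0 <= t -> I t <= I tpeak).
Proof.
  intros alpha_pos beta_gt S0_pos I0_pos tau S_deriv I_deriv _ S_rc I_rc _ S_init I_init p tpeak.
  assert (tau_pos : 0 < tau) by (apply Rdiv_lt_0_compat; lra).
  pose proof (S_I_explicit alpha tau S0 I0 tau_pos S0_pos I0_pos S I
                S_deriv I_deriv S_rc I_rc S_init I_init) as explicit.
  split; [exact explicit|].
  intros peak_pos t Ht.
  rewrite (proj2 (explicit t Ht)), (proj2 (explicit tpeak peak_pos)).
  exact (I_explicit_le_peak alpha tau S0 I0 tau_pos S0_pos I0_pos alpha_pos t peak_pos Ht).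
Qed.
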